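(* Let $G=(V,E)$ be a connected undirected unweighted graph in which every node has a self-loop, and let $k\le|V|$ be a positive integer. Let $S^*\in\arg\max_{S\subseteq V,|S|=k}\operatorname{fp}^{\infty}(G^S)$. Let $S'=S'_k$, where $S'_0=\emptyset$ and, for $i=1,\dots,k$, $S'_i=S'_{i-1}\cup\{v_i\}$ with $v_i\in\arg\max_{v\in V\setminus S'_{i-1}}\operatorname{fp}^{\infty}(G^{S'_{i-1}\cup\{v\}})$. Then $\operatorname{fp}^{\infty}(G^{S'})\ge\left(1-\frac1e\right)\operatorname{fp}^{\infty}(G^{S^*})$.
   Context: Positional Voter model. A graph $G=(V,E,w)$ has node set $V$ with $|V|=n$, edge set $E\subseteq V\times V$ and weights $w\colon E\to\mathbb{R}_{>0}$; $\operatorname{in}(u)=\{v\in V:(v,u)\in E\}$. ''Undirected unweighted'' means $E$ is symmetric and $w\equiv 1$; ''self-loop at $u$'' means $(u,u)\in E$. A configuration is a set $X\subseteq V$ (the nodes carrying the novel trait $A$). Given a biased set $S\subseteq V$ and bias $\delta\ge 0$, define $f^S_X(v\mid u)=1+\delta$ if $v\in X$ and $u\in S$, and $1$ otherwise. The process $(\mathcal{X}_t)_{t\ge0}$: given $\mathcal{X}_t=X$, a node $u$ is chosen uniformly at random from $V$, then $v\in\operatorname{in}(u)$ is chosen with probability $\frac{f^S_X(v\mid u)\,w(v,u)}{\sum_{x\in\operatorname{in}(u)} f^S_X(x\mid u)\,w(x,u)}$, and $\mathcal{X}_{t+1}=X\cup\{u\}$ if $v\in X$, $\mathcal{X}_{t+1}=X\setminus\{u\}$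 otherwise. Define $\operatorname{fp}(G^S,\delta,X)=\mathbb{P}[\exists t\ge0:\mathcal{X}_t=V\mid\mathcal{X}_0=X]$, $\operatorname{fp}(G^S,\delta)=\frac1n\sum_{u\in V}\operatorname{fp}(G^S,\delta,\{u\})$, and $\operatorname{fp}^{\infty}(G^S)=\lim_{\delta\to\infty}\operatorname{fp}(G^S,\delta)$. *)

From HB Require Import structures.
From mathcomp Require Import all_boot all_order all_algebra.
From mathcomp Require Import all_classical all_reals all_analysis.
Set Implicit Arguments. Unset Strict Implicit. Unset Printing Implicit Defensive.
Import Order.TTheory GRing.Theory Num.Theory.
Import numFieldNormedType.Exports.
Local Open Scope classical_set_scope.
Local Open Scope ring_scope.

(* Graph: node set T (a finType, V = [set: T], n = #|T|), edge relation
   e : rel T with (v,u) \in E iff e v u; unweighted (w == 1).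
   in(u) = [set v | e v u].  Configurations are X : {set T}. *)

Definition fbias (R : realType) (T : finType) (S : {set T}) (delta : R)
  (X : {set T}) (v u : T) : R :=
  if (v \in X) && (u \in S) then 1 + delta else 1.

(* one step of the Positional Voter chain, as an expectation operator:
   step h X = E[ h(X_{t+1}) | X_t = X ]  *)
Definition pv_step (R : realType) (T : finType) (e : rel T) (S : {set T})
  (delta : R) (h : {set T} -> R) (X : {set T}) : R :=
  (#|T|%:R)^-1 * \sum_(u : T) \sum_(v : T | e v u)
     (fbias S delta X v u / \sum_(x : T | e x u) fbias S delta X x u)
       * h (if v \in X then u |: X else X :\ u).

(* hit_by t X = P[ exists s <= t, X_s = V | X_0 = X ] *)
Fixpoint hit_by (R : realType) (T : finType) (e : rel T) (S : {set T})
  (delta : R) (t : nat) (X : {set T}) : R :=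
  if X == [set: T]%SET then 1 else
  match t with
  | 0 => 0
  | t'.+1 => pv_step e S delta (hit_by e S delta t') X
  end.

(* fp(G^S, delta, X) = P[ exists t, X_t = V | X_0 = X ]
   = lim_{t -> oo} P[ exists s <= t, X_s = V ]  (continuity of measure) *)
Definition fp_from (R : realType) (T : finType) (e : rel T) (S : {set T})
  (delta : R) (X : {set T}) : R :=
  lim (hit_by e S delta t X @[t --> \oo]).

Definition fp (R : realType) (T : finType) (e : rel T) (S : {set T})
  (delta : R) : R :=
  (#|T|%:R)^-1 * \sum_(u : T) fp_from e S delta [set u].

Definition fp_inf (R : realType) (T : finType) (e : rel T) (S : {set T}) : R :=
  lim (fp e S delta @[delta --> +oo]).

(* As delta -> +oo, a biased node with a mutant in-neighbour copies a mutant;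
   with self-loops, a mutant standing on a biased node is therefore never lost.
   Since every step grows a nonempty proper mutant set along a cut edge with
   probability at least n^-2, the chains are absorbed geometrically fast, and the
   t-step fixation probabilities of the biased chain are within t n^2/(1 + delta)
   of those of the limiting chain; so fp^oo(G^S) is the fixation probability of
   the limiting chain, averaged over the initial node.  For S nonempty the
   limiting chain fixates almost surely as soon as its mutant set meets S, so
   fp^oo(G^S) is the limit of the probabilities of meeting S within t steps.
   These satisfy a recursion in which S enters only through the tests "Y meets
   S" and "u is in S", hence are monotone and submodular in S, and so is their
   limit.  The bound is then the Nemhauser-Wolsey-Fisher guarantee for greedy
   maximisation of a monotone submodular function. *)

From HB Require Import structures.
From mathcomp Require Import all_boot all_order all_algebra.
From mathcomp Require Import all_classical all_reals all_analysis.
From mathcomp Require Import ring lra.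
Import Order.TTheory GRing.Theory Num.Theory.
Import numFieldNormedType.Exports.

Set Implicit Arguments.
Unset Strict Implicit.
Unset Printing Implicit Defensive.
Local Open Scope ring_scope.

(* [all_classical] shadows [set0] and several [finset] lemmas, hence the
   qualified names below. *)
Local Notation set0 := finset.set0.

Lemma exists_expr_le (R : realType) (b eps : R) :
  0 <= b < 1 -> 0 < eps -> exists j : nat, b ^+ j <= eps.
Proof.
move=> /andP[b0 b1] eps0.
have /cvg_expr /cvgrPdist_le /(_ eps eps0) [N _ HN] : `|b| < 1 by rewrite ger0_norm.
exists N; have := HN N (leqnn N); rewrite /= sub0r normrN ger0_norm //.
exact: exprn_ge0.
Qed.

Lemma ler_geometric_slack (R : realType) (b C x y : R) :
  0 <= b < 1 -> 0 <= C -> (forall j, x <= y + C * b ^+ j) -> x <= y.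
Proof.
move=> b01 C0 xy; apply/ler_addgt0Pr => eps eps0.
have C1 : 0 < C + 1 by lra.
have [j bj] := exists_expr_le b01 (divr_gt0 eps0 C1).
apply: le_trans (xy j) _; rewrite lerD2l.
apply: le_trans (ler_wpM2l C0 bj) _.
rewrite mulrA ler_pdivrMr //; nra.
Qed.

Lemma disjointsU1 (T : finType) (Z B : {set T}) a :
  [disjoint a |: B & Z] = (a \notin Z) && [disjoint B & Z].
Proof. by rewrite !finset.disjoints_subset finset.subUset finset.sub1set inE. Qed.

Lemma not_disjointP (T : finType) (A B : {set T}) :
  reflect (exists2 x, x \in A & x \in B) (~~ [disjoint A & B]).
Proof.
apply: (iffP pred0Pn) => [[x /andP[xA xB]]|[x xA xB]]; exists x => //.
exact/andP.
Qed.

Lemma cut_edge (T : finType) (e : rel T) (X : {set T}) :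
  symmetric e -> (forall x y, connect e x y) -> X != set0 -> X != [set: T] ->
  exists u v, [/\ u \notin X, v \in X & e v u].
Proof.
move=> e_sym e_conn /set0Pn[x xX]; rewrite finset.eqEsubset finset.subsetT => /subsetPn[y _ yX].
apply/not_existsP => no_cut.
have X_closed : closed_mem e (mem X).
  apply: (intro_closed (sym_connect_sym e_sym)) => a b eab aX.
  by apply/negPn/negP => bX; apply: (no_cut b); exists a.
by move: (closed_connect X_closed (e_conn x y)); rewrite xX (negbTE yX).
Qed.

Section KernelChain.
Variables (R : realType) (T : finType) (e : rel T).
Hypothesis T_gt0 : (0 < #|T|)%N.

Local Notation n := (#|T|%:R : R).

Lemma n_gt0 : 0 < n. Proof. by rewrite ltr0n. Qed.

Lemma setT_neq0 : [set: T] != set0.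
Proof. by rewrite -card_gt0 cardsT. Qed.

Definition voter_update (X : {set T}) (u v : T) : {set T} :=
  if v \in X then u |: X else X :\ u.

(* [c X u v] is the probability that the chosen node [u] copies [v]. *)
Definition kernel_step (c : {set T} -> T -> T -> R) (h : {set T} -> R)
    (X : {set T}) : R :=
  n^-1 * \sum_(u : T) \sum_(v : T | e v u) c X u v * h (voter_update X u v).

Fixpoint fix_by c (t : nat) (X : {set T}) : R :=
  if X == [set: T] then 1 else
  if t is t'.+1 then kernel_step c (fix_by c t') X else 0.

Fixpoint alive_at c (t : nat) (X : {set T}) : R :=
  if (X == [set: T]) || (X == set0) then 0 else
  if t is t'.+1 then kernel_step c (alive_at c t') X else 1.

Definition fix_prob c (X : {set T}) : R := lim (fix_by c t X @[t --> \oo])%classic.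

Lemma invn2_gt0_le1 : 0 < n^-1 * n^-1 <= 1.
Proof.
by rewrite mulr_gt0 ?invr_gt0 ?n_gt0 // mulr_ile1 ?invr_ge0 ?ler0n ?invf_le1 ?n_gt0 ?ler1n.
Qed.

Definition survival_rate : R := 1 - (n^-1 * n^-1) ^+ #|T|.

Lemma survival_rate_ge0_lt1 : 0 <= survival_rate < 1.
Proof.
have /andP[n2_gt0 n2_le1] := invn2_gt0_le1.
rewrite /survival_rate subr_ge0 (exprn_ile1 _ (ltW n2_gt0) n2_le1) /= ltrBlDr ltrDl.
exact: exprn_gt0.
Qed.

Section Kernel.
Variable c : {set T} -> T -> T -> R.
Hypothesis c_ge0 : forall X u v, 0 <= c X u v.
Hypothesis c_sum1 : forall X u, \sum_(v : T | e v u) c X u v = 1.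

Lemma kernel_step_le h1 h2 X :
  (forall Y, h1 Y <= h2 Y) -> kernel_step c h1 X <= kernel_step c h2 X.
Proof.
move=> h12; rewrite ler_wpM2l ?invr_ge0 ?ler0n //.
by do 2![apply: ler_sum => ? _]; apply: ler_wpM2l.
Qed.

Lemma kernel_stepD h1 h2 X :
  kernel_step c (fun Y => h1 Y + h2 Y) X = kernel_step c h1 X + kernel_step c h2 X.
Proof.
rewrite /kernel_step -mulrDr -big_split; congr (_ * _); apply: eq_bigr => u _.
by rewrite -big_split; apply: eq_bigr => v _; rewrite mulrDr.
Qed.

Lemma kernel_stepZ a h X :
  kernel_step c (fun Y => a * h Y) X = a * kernel_step c h X.
Proof.
rewrite /kernel_step [RHS]mulrCA [in RHS]mulr_sumr; congr (_ * _); apply: eq_bigr => u _.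
by rewrite mulr_sumr; apply: eq_bigr => v _; rewrite mulrCA.
Qed.

Lemma kernel_step_cst a X : kernel_step c (fun _ => a) X = a.
Proof.
rewrite /kernel_step (eq_bigr (fun _ => a)) => [|u _]; last by rewrite -mulr_suml c_sum1 mul1r.
by rewrite sumr_const -[a *+ _]mulr_natl mulrA mulVf ?mul1r ?gt_eqF ?n_gt0.
Qed.

Lemma kernel_step_bound h X :
  (forall Y, 0 <= h Y <= 1) -> 0 <= kernel_step c h X <= 1.
Proof.
move=> h01; apply/andP; split; [rewrite -(kernel_step_cst 0 X)|rewrite -(kernel_step_cst 1 X)];
  by apply: kernel_step_le => Y; case/andP: (h01 Y).
Qed.

Lemma kernel_step_norm h X B :
  (forall Y, `|h Y| <= B) -> `|kernel_step c h X| <= B.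
Proof.
move=> hB; rewrite ler_norml; apply/andP; split;
  [rewrite -(kernel_step_cst (- B) X)|rewrite -(kernel_step_cst B X)];
  by apply: kernel_step_le => Y; have /ler_normlP[] := hB Y; lra.
Qed.

Lemma eq_kernel_step h1 h2 X :
  (forall u v, e v u -> c X u v != 0 -> h1 (voter_update X u v) = h2 (voter_update X u v)) ->
  kernel_step c h1 X = kernel_step c h2 X.
Proof.
move=> h12; congr (_ * _); apply: eq_bigr => u _; apply: eq_bigr => v evu.
by have [->|/(h12 u v evu) ->] := eqVneq (c X u v) 0; rewrite ?mul0r.
Qed.

Lemma kernel_step_set0 h : kernel_step c h set0 = h set0.
Proof.
rewrite -[RHS](kernel_step_cst (h set0) set0); apply: eq_kernel_step => u v _ _.
by rewrite /voter_update finset.in_set0 finset.set0D.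
Qed.

Lemma kernel_step_ge_term h X u v : (forall Y, 0 <= h Y) -> e v u ->
  n^-1 * (c X u v * h (voter_update X u v)) <= kernel_step c h X.
Proof.
move=> h0 evu; rewrite ler_wpM2l ?invr_ge0 ?ler0n //.
have term_ge0 u' v' : 0 <= c X u' v' * h (voter_update X u' v') by rewrite mulr_ge0.
rewrite (bigD1 u) //= (bigD1 v) //= -addrA lerDl addr_ge0 //.
  by apply: sumr_ge0 => v' _; apply: term_ge0.
by apply: sumr_ge0 => u' _; apply: sumr_ge0 => v' _; apply: term_ge0.
Qed.

Lemma fix_by_bound t X : 0 <= fix_by c t X <= 1.
Proof.
elim: t X => [|t IH] X /=; case: ifP => _; rewrite ?lexx ?ler01 //.
exact: kernel_step_bound.
Qed.

Lemma alive_at_bound t X : 0 <= alive_at c t X <= 1.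
Proof.
elim: t X => [|t IH] X /=; case: ifP => _; rewrite ?lexx ?ler01 //.
exact: kernel_step_bound.
Qed.

Lemma fix_by_setT t : fix_by c t [set: T] = 1.
Proof. by case: t => [|t] /=; rewrite eqxx. Qed.

Lemma alive_at_setT t : alive_at c t [set: T] = 0.
Proof. by case: t => [|t] /=; rewrite eqxx. Qed.

Lemma alive_at_set0 t : alive_at c t set0 = 0.
Proof. by case: t => [|t] /=; rewrite eqxx orbT. Qed.

Lemma fix_by_set0 t : fix_by c t set0 = 0.
Proof. by elim: t => [|t IH] /=; rewrite eq_sym (negbTE setT_neq0) ?kernel_step_set0. Qed.

Lemma fix_by_nondecreasing X : {homo fix_by c ^~ X : t s / (t <= s)%N >-> t <= s}.
Proof.
apply/nondecreasing_seqP => t; elim: t X => [|t IH] X /=; case: ifP => // _.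
  by case/andP: (kernel_step_bound (h := fix_by c 0) X (fix_by_bound 0)).
exact: kernel_step_le.
Qed.

Lemma alive_at_nonincreasing X : {homo alive_at c ^~ X : t s / (t <= s)%N >-> s <= t}.
Proof.
apply/nonincreasing_seqP => t; elim: t X => [|t IH] X /=; case: ifP => // _.
  by case/andP: (kernel_step_bound (h := alive_at c 0) X (alive_at_bound 0)).
exact: kernel_step_le.
Qed.

Lemma fix_by_addn_le t s X :
  fix_by c (t + s) X <= fix_by c t X + alive_at c t X.
Proof.
elim: t X => [|t IH] X; have [->|XT] := eqVneq X [set: T];
  rewrite ?fix_by_setT ?alive_at_setT ?addr0 //;
  have [->|X0] := eqVneq X set0; rewrite ?fix_by_set0 ?alive_at_set0 ?addr0 //.
  by rewrite /= (negbTE XT) (negbTE X0) add0r; case/andP: (fix_by_bound s X).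
by rewrite addSn /= (negbTE XT) (negbTE X0) -kernel_stepD; apply: kernel_step_le.
Qed.

Lemma fix_by_alive_at_le1 t X : fix_by c t X + alive_at c t X <= 1.
Proof.
elim: t X => [|t IH] X; have [->|XT] := eqVneq X [set: T];
  rewrite ?fix_by_setT ?alive_at_setT ?addr0 //;
  have [->|X0] := eqVneq X set0; rewrite ?fix_by_set0 ?alive_at_set0 ?addr0 ?ler01 //.
  by rewrite /= (negbTE XT) (negbTE X0) add0r.
rewrite /= (negbTE XT) (negbTE X0) -kernel_stepD -[leRHS](kernel_step_cst 1 X).
exact: kernel_step_le.
Qed.

Lemma fix_by_cvg X : cvgn (fix_by c ^~ X).
Proof.
apply/cvg_ex; eexists; apply: nondecreasing_cvgn; first exact: fix_by_nondecreasing.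
by exists 1 => _ [s _ <-]; case/andP: (fix_by_bound s X).
Qed.

Lemma fix_by_le_fix_prob t X : fix_by c t X <= fix_prob c X.
Proof.
by apply: (nondecreasing_cvgn_le (u_ := fix_by c ^~ X));
  [exact: fix_by_nondecreasing | exact: fix_by_cvg].
Qed.

Lemma fix_prob_le t X : fix_prob c X <= fix_by c t X + alive_at c t X.
Proof.
apply: limr_le; first exact: fix_by_cvg.
apply: nearW => s; have [st|/ltnW ts] := leqP s t.
  apply: le_trans (fix_by_nondecreasing X st) _.
  by rewrite lerDl; case/andP: (alive_at_bound t X).
by rewrite -(subnKC ts); apply: fix_by_addn_le.
Qed.

Section Mixing.
Hypothesis e_sym : symmetric e.
Hypothesis e_conn : forall x y : T, connect e x y.
Hypothesis c_mutant : forall (X : {set T}) u v, e v u -> v \in X -> n^-1 <= c X u v.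

(* Each step grows a nonempty proper [X] along a cut edge with probability at
   least [n^-1 * n^-1]: [n^-1] to pick its endpoint [u], [n^-1] to copy [v]. *)
Lemma fix_by_ge_expr k X :
  X != set0 -> (#|~: X| <= k)%N -> (n^-1 * n^-1) ^+ k <= fix_by c k X.
Proof.
elim: k X => [|k IH] X X0 Xk.
  by move: Xk; rewrite leqn0 cards_eq0 -finset.setCT => /eqP/finset.setC_inj ->; rewrite fix_by_setT.
rewrite /=; case: ifP => [_|/negbT XT].
  by have /andP[n2_gt0 n2_le1] := invn2_gt0_le1; apply: exprn_ile1 => //; apply: ltW.
have [u [v [uX vX evu]]] := cut_edge e_sym e_conn X0 XT.
apply: le_trans (kernel_step_ge_term X (fun Y => proj1 (andP (fix_by_bound k Y))) evu).
rewrite /voter_update vX exprS -mulrA ler_wpM2l ?invr_ge0 ?ler0n //.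
apply: ler_pM; rewrite ?exprn_ge0 ?invr_ge0 ?ler0n ?mulr_ge0 ?c_mutant //.
apply: IH; first by apply/set0Pn; exists u; rewrite setU11.
move: Xk; rewrite (cardsD1 u) inE uX ltnS; apply: leq_trans.
by apply: subset_leq_card; apply/fintype.subsetP => x; rewrite !inE negb_or => /andP[-> ->].
Qed.

Lemma alive_at_addn_card t X :
  alive_at c (t + #|T|) X <= survival_rate * alive_at c t X.
Proof.
elim: t X => [|t IH] X; last first.
  rewrite addSn /=; case: ifP => _; first by rewrite mulr0.
  by rewrite -kernel_stepZ; apply: kernel_step_le.
have := fix_by_alive_at_le1 #|T| X; rewrite /=; case: ifP => [XA|/negbT].
  by case: #|T| => [|?] /=; rewrite XA mulr0.
rewrite negb_or => /andP[XT X0] le1; rewrite mulr1 lerBrDr addrC.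
apply: le_trans le1; rewrite lerD2r.
by apply: fix_by_ge_expr X0 _; apply: max_card.
Qed.

Lemma alive_at_geometric j X : alive_at c (j * #|T|) X <= survival_rate ^+ j.
Proof.
have [rate_ge0 _] := andP survival_rate_ge0_lt1.
elim: j X => [|j IH] X; first by rewrite expr0; case/andP: (alive_at_bound 0 X).
rewrite mulSn addnC exprS; apply: le_trans (alive_at_addn_card _ X) _.
by rewrite ler_wpM2l.
Qed.

Lemma fix_prob_near j X :
  `|fix_prob c X - fix_by c (j * #|T|) X| <= survival_rate ^+ j.
Proof.
have lower := fix_by_le_fix_prob (j * #|T|) X.
have upper := fix_prob_le (j * #|T|) X.
have := alive_at_geometric j X; rewrite ger0_norm ?subr_ge0 //; lra.
Qed.

End Mixing.
End Kernel.
End KernelChain.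

Lemma biased_share_mutant_near (R : realFieldType) (delta a m N : R) :
  0 <= delta -> 1 <= a -> a <= m -> m <= N ->
  `|(1 + delta) / (delta * a + m) - a^-1| <= N / (1 + delta).
Proof.
move=> d0 a1 am mN.
have D0 : 0 < delta * a + m by nra.
have -> : (1 + delta) / (delta * a + m) - a^-1 = - ((m - a) / (a * (delta * a + m))).
  by field; rewrite !gt_eqF //; lra.
have aD0 : 0 < a * (delta * a + m) by nra.
rewrite normrN ger0_norm ?divr_ge0 ?subr_ge0 ?(ltW aD0) // ler_pdivrMr //.
rewrite mulrAC ler_pdivlMr; last lra.
have h1 : 1 + delta <= a * (delta * a + m) by nra.
have h2 : (m - a) * (1 + delta) <= N * (1 + delta) by apply: ler_wpM2r; lra.
have h3 : N * (1 + delta) <= N * (a * (delta * a + m)) by apply: ler_wpM2l; lra.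
exact: le_trans h2 h3.
Qed.

Lemma biased_share_wild_le (R : realFieldType) (delta a m N : R) :
  0 <= delta -> 1 <= a -> a <= m -> 1 <= N -> (delta * a + m)^-1 <= N / (1 + delta).
Proof.
move=> d0 a1 am N1.
have D1 : 1 + delta <= delta * a + m by nra.
rewrite -div1r ler_pdivrMr; last lra.
rewrite mulrAC ler_pdivlMr; last lra.
rewrite mul1r; apply: le_trans D1 _; rewrite ler_peMl //; nra.
Qed.

Section LimitKernel.
Variables (R : realType) (T : finType) (e : rel T).
Hypothesis e_loop : forall u : T, e u u.
Hypothesis T_gt0 : (0 < #|T|)%N.
Variable S : {set T}.

Local Notation n := (#|T|%:R : R).
Local Notation in_deg u := #|[pred x | e x u]|.
Local Notation mutant_in_deg X u := #|[pred x | e x u && (x \in X)]|.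

Lemma in_deg_gt0 u : (0 < in_deg u)%N.
Proof. by apply/card_gt0P; exists u; rewrite inE e_loop. Qed.

Lemma mutant_in_deg_le (X : {set T}) u : (mutant_in_deg X u <= in_deg u)%N.
Proof. by apply: subset_leq_card; apply/fintype.subsetP => x /andP[]. Qed.

Lemma invn_le_invr (k : nat) : (0 < k)%N -> (k <= #|T|)%N -> n^-1 <= k%:R^-1.
Proof. by move=> k_gt0 k_le; rewrite lef_pV2 ?posrE ?ltr0n ?ler_nat // (leq_trans k_gt0). Qed.

Definition biased_kernel (delta : R) (X : {set T}) (u v : T) : R :=
  fbias S delta X v u / \sum_(x : T | e x u) fbias S delta X x u.

(* The pointwise limit of [biased_kernel delta] as [delta -> +oo]. *)
Definition limit_kernel (X : {set T}) (u v : T) : R :=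
  if [exists x, e x u && (x \in X)] && (u \in S) then
    (if v \in X then (mutant_in_deg X u)%:R^-1 else 0)
  else (in_deg u)%:R^-1.

Lemma hit_by_biased delta t :
  hit_by e S delta t = fix_by e (biased_kernel delta) t.
Proof. by elim: t => [|t IH] //=; rewrite IH. Qed.

Lemma fp_from_biased delta X :
  fp_from e S delta X = fix_prob e (biased_kernel delta) X.
Proof.
by rewrite /fp_from (_ : (fun t => _) = fix_by e (biased_kernel delta) ^~ X) //;
  apply: funext => t; rewrite hit_by_biased.
Qed.

Lemma fbias_ge1 (delta : R) X x u : 0 <= delta -> 1 <= fbias S delta X x u.
Proof. by rewrite /fbias; case: ifP => _; lra. Qed.

Lemma sum_fbias (delta : R) X u :
  \sum_(x | e x u) fbias S delta X x u =
  (if u \in S then delta * (mutant_in_deg X u)%:R else 0) + (in_deg u)%:R.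
Proof.
have fbiasE x : fbias S delta X x u = (if (x \in X) && (u \in S) then delta else 0) + 1.
  by rewrite /fbias; case: ifP => _; rewrite ?add0r // addrC.
rewrite (eq_bigr _ (fun x _ => fbiasE x)) big_split /= sumr_const; congr (_ + _).
case: (boolP (u \in S)) => uS; last by rewrite big1 // => x _; rewrite andbF.
rewrite (eq_bigr (fun x => if x \in X then delta else 0)) => [|x _]; last by rewrite andbT.
by rewrite -big_mkcondr /= sumr_const mulr_natr.
Qed.

Lemma sum_fbias_ge1 (delta : R) X u : 0 <= delta -> 1 <= \sum_(x | e x u) fbias S delta X x u.
Proof.
move=> d0; rewrite sum_fbias ler_wpDl ?ler1n ?in_deg_gt0 //.
by case: ifP => _; rewrite ?mulr_ge0 ?ler0n.
Qed.

Lemma biased_kernel_ge0 (delta : R) :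
  0 <= delta -> forall X u v, 0 <= biased_kernel delta X u v.
Proof.
move=> d0 X u v; apply: divr_ge0; first by apply: le_trans (fbias_ge1 _ _ _ d0).
by apply: le_trans (sum_fbias_ge1 _ _ d0).
Qed.

Lemma biased_kernel_sum1 (delta : R) :
  0 <= delta -> forall X u, \sum_(v | e v u) biased_kernel delta X u v = 1.
Proof.
move=> d0 X u; rewrite -mulr_suml divff // gt_eqF //.
exact: lt_le_trans ltr01 (sum_fbias_ge1 _ _ d0).
Qed.

Lemma biased_kernel_mutant (delta : R) :
  0 <= delta -> forall (X : {set T}) u v, e v u -> v \in X -> n^-1 <= biased_kernel delta X u v.
Proof.
move=> d0 X u v evu vX; have sum_gt0 := lt_le_trans ltr01 (sum_fbias_ge1 X u d0).
rewrite ler_pdivlMr // ler_pdivrMl ?n_gt0 //.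
apply: le_trans (_ : _ <= \sum_(x | e x u) fbias S delta X v u) _.
  apply: ler_sum => x _; rewrite /fbias vX /=.
  by case: (u \in S); rewrite ?andbT ?andbF //; case: ifP => _; lra.
rewrite sumr_const -[fbias _ _ _ _ _ *+ _]mulr_natl ler_wpM2r ?ler_nat ?max_card //.
exact: le_trans ler01 (fbias_ge1 _ _ _ d0).
Qed.

Lemma limit_kernel_ge0 X u v : 0 <= limit_kernel X u v.
Proof. by rewrite /limit_kernel; case: ifP => _; [case: ifP => _|]; rewrite ?invr_ge0. Qed.

Lemma limit_kernel_sum1 X u : \sum_(v | e v u) limit_kernel X u v = 1.
Proof.
rewrite /limit_kernel.
case: (boolP ([exists x, e x u && (x \in X)] && (u \in S))) => [/andP[/existsP[x xN] _]|_].
  rewrite -big_mkcondr /= sumr_const -[_^-1 *+ _]mulr_natr mulVf // pnatr_eq0 -lt0n.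
  by apply/card_gt0P; exists x.
by rewrite sumr_const -[_^-1 *+ _]mulr_natr mulVf // pnatr_eq0 -lt0n in_deg_gt0.
Qed.

Lemma limit_kernel_mutant (X : {set T}) u v :
  e v u -> v \in X -> n^-1 <= limit_kernel X u v.
Proof.
move=> evu vX; rewrite /limit_kernel; case: ifP => _; rewrite ?vX invn_le_invr ?max_card //.
  by apply/card_gt0P; exists v; rewrite inE evu.
exact: in_deg_gt0.
Qed.

Lemma biased_kernel_near (delta : R) X u v : 0 <= delta -> e v u ->
  `|biased_kernel delta X u v - limit_kernel X u v| <= n / (1 + delta).
Proof.
move=> d0 evu; have n1 : 1 <= n by rewrite ler1n.
have am := mutant_in_deg_le X u; have mN : (in_deg u <= #|T|)%N by exact: max_card.
rewrite /biased_kernel /limit_kernel sum_fbias /fbias.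
case: (boolP (u \in S)) => uS /=; rewrite ?andbF ?andbT ?add0r; last first.
  by rewrite div1r subrr normr0 divr_ge0 ?ler0n //; lra.
case: (boolP [exists x, e x u && (x \in X)]) => [/existsP[x xN]|/existsPn noN] /=.
  have a1 : (1 <= mutant_in_deg X u)%N by apply/card_gt0P; exists x.
  case: (boolP (v \in X)) => vX.
    by apply: biased_share_mutant_near; rewrite ?ler1n ?ler_nat.
  rewrite div1r subr0 ger0_norm ?invr_ge0; last by rewrite addr_ge0 ?mulr_ge0 ?ler0n.
  by apply: biased_share_wild_le; rewrite ?ler1n ?ler_nat.
have -> : mutant_in_deg X u = 0%N by apply: eq_card0 => y; apply/negbTE/noN.
have := noN v; rewrite evu /= => /negbTE ->.
by rewrite mulr0 add0r div1r subrr normr0 divr_ge0 ?ler0n //; lra.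
Qed.

Lemma kernel_step_near (delta : R) h X : 0 <= delta -> (forall Y, `|h Y| <= 1) ->
  `|kernel_step e (biased_kernel delta) h X - kernel_step e limit_kernel h X|
    <= n * (n / (1 + delta)).
Proof.
move=> d0 h1; rewrite /kernel_step -mulrBr -sumrB normrM ger0_norm ?invr_ge0 ?ler0n //.
rewrite ler_pdivrMl ?n_gt0 //; apply: le_trans (ler_norm_sum _ _ _) _.
apply: le_trans (_ : _ <= \sum_(u : T) n * (n / (1 + delta))) _; last first.
  by rewrite sumr_const -[(_ * _) *+ _]mulr_natl.
apply: ler_sum => u _; rewrite -sumrB; apply: le_trans (ler_norm_sum _ _ _) _.
apply: le_trans (_ : _ <= \sum_(v | e v u) n / (1 + delta)) _.
  apply: ler_sum => v evu; rewrite -mulrBl normrM -[leRHS]mulr1.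
  by apply: ler_pM; rewrite ?normr_ge0 ?biased_kernel_near.
rewrite sumr_const -[(_ / _) *+ _]mulr_natl ler_wpM2r ?ler_nat ?max_card //.
by rewrite divr_ge0 ?ler0n //; lra.
Qed.

Lemma fix_by_near (delta : R) t X : 0 <= delta ->
  `|fix_by e (biased_kernel delta) t X - fix_by e limit_kernel t X|
    <= t%:R * (n * (n / (1 + delta))).
Proof.
move=> d0; have K0 : 0 <= n * (n / (1 + delta)) by rewrite mulr_ge0 ?divr_ge0 ?ler0n //; lra.
elim: t X => [|t IH] X /=; first by rewrite subrr normr0 mul0r.
case: ifP => _; first by rewrite subrr normr0 mulr_ge0 ?ler0n.
set cd := biased_kernel delta; set fd := fix_by e cd t; set fl := fix_by e limit_kernel t.
have -> : kernel_step e cd fd X - kernel_step e limit_kernel fl X =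
    kernel_step e cd (fun Y => fd Y + (-1) * fl Y) X +
    (kernel_step e cd fl X - kernel_step e limit_kernel fl X).
  by rewrite kernel_stepD kernel_stepZ; ring.
apply: le_trans (ler_normD _ _) _; rewrite mulrSr mulrDl mul1r lerD //.
  apply: (kernel_step_norm T_gt0 (biased_kernel_ge0 d0) (biased_kernel_sum1 d0)) => Y.
  by rewrite mulN1r.
apply: kernel_step_near => // Y.
have /andP[fl0 fl1] := fix_by_bound T_gt0 limit_kernel_ge0 limit_kernel_sum1 t Y.
by rewrite ger0_norm.
Qed.

Section Limit.
Hypothesis e_sym : symmetric e.
Hypothesis e_conn : forall x y : T, connect e x y.

Lemma fix_prob_biased_near (delta : R) j X : 0 <= delta ->
  `|fix_prob e limit_kernel X - fix_prob e (biased_kernel delta) X|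
    <= 2 * survival_rate R T ^+ j + (j * #|T|)%:R * (n * (n / (1 + delta))).
Proof.
move=> d0; set t := (j * #|T|)%N.
have near_l := fix_prob_near T_gt0 limit_kernel_ge0 limit_kernel_sum1 e_sym e_conn
  limit_kernel_mutant j X.
have near_d := fix_prob_near T_gt0 (biased_kernel_ge0 d0) (biased_kernel_sum1 d0) e_sym e_conn
  (biased_kernel_mutant d0) j X.
have near_t := fix_by_near t X d0; rewrite distrC in near_t.
have := ler_distD (fix_by e limit_kernel t X) (fix_prob e limit_kernel X)
  (fix_prob e (biased_kernel delta) X).
have := ler_distD (fix_by e (biased_kernel delta) t X) (fix_by e limit_kernel t X)
  (fix_prob e (biased_kernel delta) X).
rewrite [`|fix_by e (biased_kernel delta) t X - _|]distrC; lra.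
Qed.

Lemma fp_inf_limit : fp_inf R e S = n^-1 * \sum_(x : T) fix_prob e limit_kernel [set x].
Proof.
apply: cvg_lim; first exact: Rhausdorff.
apply/cvgrPdist_le => eps eps0.
have [j rate_j] := exists_expr_le (survival_rate_ge0_lt1 R T_gt0) (divr_gt0 eps0 (ltr0n R 4)).
pose C := (j * #|T|)%:R * (n * n).
have C0 : 0 <= C by rewrite !mulr_ge0 ?ler0n.
apply: filterS (nbhs_pinfty_ge (num_real (2 * C / eps))) => delta le_delta.
have d0 : 0 <= delta by apply: le_trans le_delta; rewrite !mulr_ge0 ?invr_ge0 // ltW.
have d1 : 0 < 1 + delta by lra.
have step_err : (j * #|T|)%:R * (n * (n / (1 + delta))) <= eps / 2.
  rewrite (_ : _ * _ = C / (1 + delta)); last by rewrite /C !mulrA.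
  move: le_delta; rewrite ler_pdivrMr // ler_pdivrMr //; nra.
rewrite /fp -mulrBr normrM ger0_norm ?invr_ge0 ?ler0n // ler_pdivrMl ?n_gt0 // -sumrB.
apply: le_trans (ler_norm_sum _ _ _) _.
apply: le_trans (_ : _ <= \sum_(x : T) eps) _; last by rewrite sumr_const -[eps *+ _]mulr_natl.
apply: ler_sum => x _.
rewrite fp_from_biased; apply: le_trans (fix_prob_biased_near j [set x] d0) _; lra.
Qed.

End Limit.
End LimitKernel.

Section MonotoneSubmodular.
Variables (R : realType) (T : finType).

Record monotone_submodular (g : {set T} -> R) : Prop := MonotoneSubmodular {
  ms_mono : forall A B : {set T}, A \subset B -> g A <= g B;
  ms_submod : forall (A B : {set T}) a, A \subset B -> a \notin B ->
    g (a |: B) - g B <= g (a |: A) - g A }.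

Lemma monotone_submodular_cst c : monotone_submodular (fun _ => c).
Proof. by split=> *; rewrite ?subrr. Qed.

Lemma monotone_submodularZ k g :
  0 <= k -> monotone_submodular g -> monotone_submodular (fun S => k * g S).
Proof.
move=> k0 [g_mono g_sub]; split=> [A B AB|A B a AB aB]; first by rewrite ler_wpM2l ?g_mono.
by rewrite -!mulrBr ler_wpM2l ?g_sub.
Qed.

Lemma monotone_submodular_sum (I : finType) (P : pred I) (F : I -> {set T} -> R) :
  (forall i, monotone_submodular (F i)) ->
  monotone_submodular (fun S => \sum_(i | P i) F i S).
Proof.
move=> F_ms; split=> [A B AB|A B a AB aB].
  by apply: ler_sum => i _; apply: ms_mono.
by rewrite -!sumrB; apply: ler_sum => i _; apply: ms_submod.
Qed.

Lemma monotone_submodular_meet (Z : {set T}) (F : {set T} -> R) :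
  monotone_submodular F -> (forall S, F S <= 1) ->
  monotone_submodular (fun S => if ~~ [disjoint S & Z] then 1 else F S).
Proof.
move=> [F_mono F_sub] F1; split=> [A B AB|A B a AB aB].
  case: (boolP [disjoint A & Z]) => /= AZ; last by rewrite (contraNN (disjointWl AB) AZ).
  by case: ifP => _; [exact: F1 | exact: F_mono].
rewrite !disjointsU1; case: (boolP [disjoint A & Z]) => AZ; last first.
  by rewrite (negbTE (contraNN (disjointWl AB) AZ)) !andbF /= subrr.
case: (boolP [disjoint B & Z]) => BZ /=; rewrite ?andbT ?andbF; last first.
  by rewrite subrr subr_ge0; case: ifP => _; rewrite ?F1 ?F_mono ?finset.subsetU1.
by case: ifP => _; [rewrite lerD2l lerN2 F_mono | exact: F_sub].
Qed.

Lemma monotone_submodular_approx (f : {set T} -> R) (g : nat -> {set T} -> R) b :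
  0 <= b < 1 -> (forall j, monotone_submodular (g j)) ->
  (forall j S, `|f S - g j S| <= b ^+ j) -> monotone_submodular f.
Proof.
move=> b01 g_ms fg; have /andP[b0 _] := b01.
have g_near j S : g j S - b ^+ j <= f S <= g j S + b ^+ j.
  by have /ler_normlP[] := fg j S; rewrite !lerBlDr => *; apply/andP; split; lra.
split=> [A B AB|A B a AB aB].
  apply: (ler_geometric_slack (C := 2) b01) => // j.
  have := ms_mono (g_ms j) AB.
  by have /andP[? ?] := g_near j A; have /andP[? ?] := g_near j B; lra.
apply: (ler_geometric_slack (C := 4) b01) => // j.
have := ms_submod (g_ms j) AB aB.
have /andP[? ?] := g_near j A; have /andP[? ?] := g_near j B.
by have /andP[? ?] := g_near j (a |: A); have /andP[? ?] := g_near j (a |: B); lra.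
Qed.

End MonotoneSubmodular.

Lemma expr_one_sub_invn_le (R : realType) (k : nat) :
  (0 < k)%N -> (1 - k%:R^-1) ^+ k <= (expR (1 : R))^-1.
Proof.
move=> k_gt0; have kR : 0 < (k%:R : R) by rewrite ltr0n.
have q0 : 0 <= 1 - (k%:R : R)^-1 by rewrite subr_ge0 invf_le1 // ler1n.
apply: le_trans (_ : _ <= expR (- k%:R^-1) ^+ k) _.
  by rewrite lerXn2r ?nnegrE ?expR_ge0 ?expR_ge1Dx.
by rewrite -expRM_natl mulrN mulfV ?gt_eqF // expRN.
Qed.

Section Greedy.
Variables (R : realType) (T : finType) (g : {set T} -> R).
Hypothesis g_ms : monotone_submodular g.

Lemma submodular_setU_seq_le (A : {set T}) (s : seq T) :
  g (A :|: [set x in s]) <= g A + \sum_(o <- s) (g (o |: A) - g A).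
Proof.
elim: s => [|o s IH].
  by rewrite big_nil addr0 (_ : [set x in [::]] = set0) ?finset.setU0.
have -> : A :|: [set x in o :: s] = o |: (A :|: [set x in s]).
  by apply/finset.setP => x; rewrite !inE orbCA.
set C := A :|: [set x in s].
rewrite big_cons addrCA; apply: le_trans (_ : _ <= g (o |: A) - g A + g C) _; last first.
  by rewrite lerD2l.
rewrite -lerBlDr; case: (boolP (o \in C)) => [oC|oC].
  rewrite (finset.setUidPr _) ?finset.sub1set // subrr subr_ge0.
  by apply: (ms_mono g_ms); apply: finset.subsetU1.
by apply: (ms_submod g_ms) oC; apply: finset.subsetUl.
Qed.

Lemma greedy_gap (A O : {set T}) b :
  (forall x, x \notin A -> g (x |: A) <= g (b |: A)) ->
  g O <= g A + #|O|%:R * (g (b |: A) - g A).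
Proof.
move=> b_best; apply: le_trans (ms_mono g_ms (finset.subsetUr A O)) _.
rewrite -{1}(set_enum O); apply: le_trans (submodular_setU_seq_le _ _) _.
rewrite lerD2l big_enum /=.
apply: le_trans (_ : _ <= \sum_(o in O) (g (b |: A) - g A)) _; last first.
  by rewrite sumr_const mulr_natl.
apply: ler_sum => o _; case: (boolP (o \in A)) => [oA|/b_best]; last by rewrite lerD2r.
rewrite (finset.setUidPr _) ?finset.sub1set // subrr subr_ge0.
by apply: (ms_mono g_ms); apply: finset.subsetU1.
Qed.

Definition greedy_prefix k (v : 'I_k -> T) (i : nat) : {set T} :=
  [set v j | j : 'I_k & (j < i)%N].

Lemma greedy_prefix0 k (v : 'I_k -> T) : greedy_prefix v 0 = set0.
Proof. by apply/finset.setP => y; rewrite inE; apply/imsetP => -[j]; rewrite inE ltn0. Qed.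

Lemma greedy_prefixS k (v : 'I_k -> T) i (ik : (i < k)%N) :
  greedy_prefix v i.+1 = v (Ordinal ik) |: greedy_prefix v i.
Proof.
apply/finset.setP => y; rewrite finset.in_setU1; apply/imsetP/idP => [[j]|].
  rewrite inE ltnS leq_eqVlt => /orP[/eqP ji|ji] ->.
    by rewrite (_ : j = Ordinal ik) ?eqxx //; apply: val_inj.
  by apply/orP; right; apply/imsetP; exists j; rewrite // inE.
case/orP => [/eqP ->|/imsetP[j]]; first by exists (Ordinal ik); rewrite // inE.
by rewrite inE => ji ->; exists j; rewrite // inE ltnS ltnW.
Qed.

Lemma greedy_prefix_all k (v : 'I_k -> T) : greedy_prefix v k = [set v j | j : 'I_k].
Proof.
by apply/finset.setP => y; apply/imsetP/imsetP => -[j _ ->]; exists j; rewrite ?inE ?ltn_ord.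
Qed.

Hypothesis g0 : g set0 = 0.

Lemma greedy_approx_expr k (v : 'I_k -> T) (O : {set T}) :
  (0 < k)%N -> (#|O| <= k)%N ->
  (forall (i : 'I_k) x, x \notin greedy_prefix v i ->
     g (x |: greedy_prefix v i) <= g (v i |: greedy_prefix v i)) ->
  (1 - (1 - k%:R^-1) ^+ k) * g O <= g [set v j | j : 'I_k].
Proof.
move=> k_gt0 Ok v_greedy; have kR : 0 < (k%:R : R) by rewrite ltr0n.
set q := 1 - k%:R^-1; have q0 : 0 <= q by rewrite subr_ge0 invf_le1 // ler1n.
suff gap i : (i <= k)%N -> g O - g (greedy_prefix v i) <= q ^+ i * g O.
  by have := gap k (leqnn k); rewrite greedy_prefix_all; lra.
elim: i => [|i IH] ik; first by rewrite greedy_prefix0 g0 subr0 expr0 mul1r.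
set P := greedy_prefix v i; set P' := greedy_prefix v i.+1.
have inc : g O <= g P + k%:R * (g P' - g P).
  rewrite /P' greedy_prefixS; apply: le_trans (greedy_gap O (v_greedy (Ordinal ik))) _.
  rewrite lerD2l ler_wpM2r ?ler_nat // subr_ge0.
  by apply: (ms_mono g_ms); apply: finset.subsetU1.
have step : g O - g P' <= q * (g O - g P).
  have : (g O - g P) / k%:R <= g P' - g P by rewrite ler_pdivrMr // mulrC; lra.
  rewrite /q; lra.
apply: le_trans step _; rewrite exprS -mulrA ler_wpM2l //; exact: IH (ltnW ik).
Qed.

Lemma greedy_approx k (v : 'I_k -> T) (O : {set T}) :
  (0 < k)%N -> (#|O| <= k)%N ->
  (forall (i : 'I_k) x, x \notin greedy_prefix v i ->
     g (x |: greedy_prefix v i) <= g (v i |: greedy_prefix v i)) ->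
  (1 - (expR (1 : R))^-1) * g O <= g [set v j | j : 'I_k].
Proof.
move=> k_gt0 Ok v_greedy; apply: le_trans (greedy_approx_expr k_gt0 Ok v_greedy).
have gO : 0 <= g O by rewrite -g0 (ms_mono g_ms) ?finset.sub0set.
by rewrite ler_wpM2r // lerD2l lerN2 expr_one_sub_invn_le.
Qed.

End Greedy.

Section MeetProbability.
Variables (R : realType) (T : finType) (e : rel T).
Hypothesis e_loop : forall u : T, e u u.
Hypothesis T_gt0 : (0 < #|T|)%N.

Local Notation n := (#|T|%:R : R).
Local Notation in_deg u := #|[pred x | e x u]|.

Definition nbr_mean (h : T -> R) (u : T) : R := (in_deg u)%:R^-1 * \sum_(v | e v u) h v.

Lemma nbr_mean_le1 h u : (forall v, h v <= 1) -> nbr_mean h u <= 1.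
Proof.
move=> h1; rewrite /nbr_mean ler_pdivrMl ?ltr0n ?in_deg_gt0 // mulr1.
by apply: le_trans (_ : _ <= \sum_(v | e v u) 1) _; [apply: ler_sum | rewrite sumr_const].
Qed.

Lemma monotone_submodular_nbr_mean (h : T -> {set T} -> R) u :
  (forall v, monotone_submodular (h v)) ->
  monotone_submodular (fun S => nbr_mean (h ^~ S) u).
Proof.
move=> h_ms; apply: monotone_submodularZ; first by rewrite invr_ge0.
exact: monotone_submodular_sum.
Qed.

(* A node [u \in S] with a mutant in-neighbour turns mutant, and [S] is met. *)
Definition meet_step (S X : {set T}) (h : {set T} -> R) : R :=
  n^-1 * \sum_(u : T)
    (if [exists x, e x u && (x \in X)] && (u \in S) then 1
     else nbr_mean (fun v => h (voter_update X u v)) u).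

Lemma meet_step_le1 (S X : {set T}) h : (forall Y, h Y <= 1) -> meet_step S X h <= 1.
Proof.
move=> h1; rewrite ler_pdivrMl ?ltr0n // mulr1.
apply: le_trans (_ : _ <= \sum_(u : T) 1) _; last by rewrite sumr_const.
by apply: ler_sum => u _; case: ifP => _ //; apply: nbr_mean_le1.
Qed.

Lemma monotone_submodular_meet_step X (h : {set T} -> {set T} -> R) :
  (forall Y, monotone_submodular (h ^~ Y)) -> (forall S Y, h S Y <= 1) ->
  monotone_submodular (fun S => meet_step S X (h S)).
Proof.
move=> h_ms h1; apply: monotone_submodularZ; first by rewrite invr_ge0.
apply: monotone_submodular_sum => u.
case: [exists x, e x u && (x \in X)] => /=.
  rewrite (_ : (fun S => _) = fun S : {set T} => if ~~ [disjoint S & [set u]] then 1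
    else nbr_mean (fun v => h S (voter_update X u v)) u); last first.
    by apply: funext => S; rewrite disjoint_sym finset.disjoints1 negbK.
  apply: monotone_submodular_meet => [|S]; last exact: nbr_mean_le1.
  by apply: (monotone_submodular_nbr_mean (h := fun v S => h S (voter_update X u v))).
by apply: (monotone_submodular_nbr_mean (h := fun v S => h S (voter_update X u v))).
Qed.

(* The probability that the [limit_kernel S] chain started at [X] meets [S]
   within [t] steps, written so that [S] occurs only through the tests
   [~~ [disjoint S & _]] and [u \in S]. *)
Fixpoint meet_by (S : {set T}) (t : nat) (X : {set T}) : R :=
  if ~~ [disjoint S & X] then 1 else
  if t is t'.+1 then meet_step S X (meet_by S t') else 0.

Lemma meet_by_le1 (S : {set T}) t X : meet_by S t X <= 1.
Proof.
by elim: t X => [|t IH] X /=; case: ifP => _ //; rewrite ?ler01 ?meet_step_le1.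
Qed.

Lemma meet_by_meet (S X : {set T}) t : ~~ [disjoint S & X] -> meet_by S t X = 1.
Proof. by case: t => [|t] /= ->. Qed.

Lemma meet_by_set0 t X : meet_by set0 t X = 0.
Proof.
elim: t X => [|t IH] X /=; rewrite finset.disjoints_subset finset.sub0set //=.
rewrite /meet_step big1 ?mulr0 // => u _; rewrite finset.in_set0 andbF.
by rewrite /nbr_mean big1 ?mulr0.
Qed.

Lemma meet_by_monotone_submodular t X :
  monotone_submodular (fun S => meet_by S t X).
Proof.
elim: t X => [|t IH] X /=.
  by apply: monotone_submodular_meet => [|S]; [apply: monotone_submodular_cst | apply: ler01].
apply: monotone_submodular_meet => [|S]; last exact: meet_step_le1 (meet_by_le1 S t).
exact: (@monotone_submodular_meet_step X (fun S => meet_by S t) IH (meet_by_le1 ^~ t)).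
Qed.

Section Sandwich.
Hypothesis e_sym : symmetric e.
Hypothesis e_conn : forall x y : T, connect e x y.
Variable S : {set T}.

Local Notation c := (limit_kernel R e S).
Let c_ge0 := limit_kernel_ge0 R e S.
Let c_sum1 := limit_kernel_sum1 R e_loop S.
Let c_mutant := limit_kernel_mutant R e_loop T_gt0 S.

Lemma meet_step_kernel (X : {set T}) (h : {set T} -> R) : [disjoint S & X] ->
  (forall Y : {set T}, ~~ [disjoint S & Y] -> h Y = 1) -> meet_step S X h = kernel_step e c h X.
Proof.
move=> SX h_meet; congr (_ * _); apply: eq_bigr => u _.
rewrite /limit_kernel; case: ifP => [/andP[ex uS]|_]; last by rewrite /nbr_mean mulr_sumr.
rewrite -[LHS](c_sum1 X u) /limit_kernel ex uS /=.
apply: eq_bigr => v evu; case: ifP => vX; last by rewrite mul0r.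
by rewrite /voter_update vX h_meet ?mulr1 // disjoint_sym disjointsU1 uS.
Qed.

Lemma meet_by_step t (X : {set T}) :
  [disjoint S & X] -> meet_by S t.+1 X = kernel_step e c (meet_by S t) X.
Proof. by move=> SX; rewrite /= SX /= meet_step_kernel // => Y; apply: meet_by_meet. Qed.

Lemma voter_update_meet (X : {set T}) u v :
  ~~ [disjoint S & X] -> c X u v != 0 -> ~~ [disjoint S & voter_update X u v].
Proof.
move=> /not_disjointP[s sS sX] cuv; apply/not_disjointP; exists s => //.
rewrite /voter_update; case: ifP => vX; first by rewrite setU1r.
rewrite !inE sX andbT; apply: contraNneq cuv => su.
rewrite /limit_kernel vX -su sS andbT.
by case: ifP => // /negbT/existsPn/(_ s); rewrite e_loop sX.
Qed.

Hypothesis S_neq0 : S != set0.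

Lemma setT_meet : ~~ [disjoint S & [set: T]].
Proof. by case/set0Pn: S_neq0 => s sS; apply/not_disjointP; exists s; rewrite ?inE. Qed.

Lemma fix_by_le_meet_by t X : fix_by e c t X <= meet_by S t X.
Proof.
elim: t X => [|t IH] X; have [->|XT] := eqVneq X [set: T];
  try by rewrite fix_by_setT meet_by_meet ?setT_meet.
  by rewrite /= (negbTE XT) /=; case: ifP => _; rewrite ?ler01.
case: (boolP [disjoint S & X]) => SX; last first.
  by rewrite meet_by_meet //; case/andP: (fix_by_bound T_gt0 c_ge0 c_sum1 t.+1 X).
by rewrite meet_by_step //= (negbTE XT); apply: kernel_step_le.
Qed.

Lemma fix_by_alive_at_meet t (X : {set T}) :
  ~~ [disjoint S & X] -> fix_by e c t X + alive_at e c t X = 1.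
Proof.
elim: t X => [|t IH] X SX; have [->|XT] := eqVneq X [set: T];
  rewrite ?fix_by_setT ?alive_at_setT ?addr0 //;
  have X0 : X != set0 by case/not_disjointP: SX => s _ sX; apply/set0Pn; exists s.
  by rewrite /= (negbTE XT) (negbTE X0) add0r.
rewrite /= (negbTE XT) (negbTE X0) /= -kernel_stepD -[RHS](kernel_step_cst T_gt0 c_sum1 1 X).
by apply: eq_kernel_step => u v _ cuv; apply: IH (voter_update_meet SX cuv).
Qed.

Lemma fix_prob_meet (X : {set T}) : ~~ [disjoint S & X] -> fix_prob e c X = 1.
Proof.
move=> SX; apply/eqP; rewrite eq_le; apply/andP; split.
  apply: le_trans (fix_prob_le T_gt0 c_ge0 c_sum1 0 X) _.
  exact: fix_by_alive_at_le1.
apply: (ler_geometric_slack (survival_rate_ge0_lt1 R T_gt0) ler01) => j.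
have := fix_by_le_fix_prob T_gt0 c_ge0 c_sum1 (j * #|T|) X.
have := alive_at_geometric T_gt0 c_ge0 c_sum1 e_sym e_conn c_mutant j X.
have := fix_by_alive_at_meet (j * #|T|) SX; lra.
Qed.

Lemma fix_prob_superharmonic (X : {set T}) :
  X != [set: T] -> kernel_step e c (fix_prob e c) X <= fix_prob e c X.
Proof.
move=> XT; have [->|X0] := eqVneq X set0; first by rewrite kernel_step_set0.
apply: (ler_geometric_slack (survival_rate_ge0_lt1 R T_gt0) ler01) => j.
set t := (j * #|T|)%N.
have step_le : kernel_step e c (fix_prob e c) X <= fix_by e c t.+1 X + alive_at e c t.+1 X.
  rewrite /= (negbTE XT) (negbTE X0) /= -kernel_stepD.
  by apply: (kernel_step_le e c_ge0) => Y; apply: (fix_prob_le T_gt0 c_ge0 c_sum1).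
have := fix_by_le_fix_prob T_gt0 c_ge0 c_sum1 t.+1 X.
have := alive_at_nonincreasing T_gt0 c_ge0 c_sum1 X (leqnSn t).
have := alive_at_geometric T_gt0 c_ge0 c_sum1 e_sym e_conn c_mutant j X; lra.
Qed.

Lemma meet_by_le_fix_prob t (X : {set T}) : meet_by S t X <= fix_prob e c X.
Proof.
elim: t X => [|t IH] X; case: (boolP [disjoint S & X]) => SX;
  try by rewrite meet_by_meet ?fix_prob_meet.
  have /andP[fix0 _] := fix_by_bound T_gt0 c_ge0 c_sum1 0 X.
  by rewrite /= SX /=; apply: le_trans fix0 (fix_by_le_fix_prob T_gt0 c_ge0 c_sum1 0 X).
have XT : X != [set: T] by apply: contraTneq SX => ->; apply: setT_meet.
rewrite meet_by_step //; apply: le_trans (fix_prob_superharmonic XT).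
exact: kernel_step_le.
Qed.

Lemma fix_prob_near_meet_by j X :
  `|fix_prob e c X - meet_by S (j * #|T|) X| <= survival_rate R T ^+ j.
Proof.
have lower := meet_by_le_fix_prob (j * #|T|) X.
have upper := fix_prob_le T_gt0 c_ge0 c_sum1 (j * #|T|) X.
have := fix_by_le_meet_by (j * #|T|) X.
have := alive_at_geometric T_gt0 c_ge0 c_sum1 e_sym e_conn c_mutant j X.
by rewrite ger0_norm ?subr_ge0 //; lra.
Qed.

End Sandwich.
End MeetProbability.

Section Submodularity.
Variables (R : realType) (T : finType) (e : rel T).
Hypothesis e_sym : symmetric e.
Hypothesis e_loop : forall u : T, e u u.
Hypothesis e_conn : forall x y : T, connect e x y.
Hypothesis T_gt0 : (0 < #|T|)%N.

Local Notation n := (#|T|%:R : R).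

Definition meet_value (j : nat) (S : {set T}) : R :=
  n^-1 * \sum_(x : T) meet_by R e S (j * #|T|) [set x].

Lemma meet_value_monotone_submodular j : monotone_submodular (meet_value j).
Proof.
apply: monotone_submodularZ; first by rewrite invr_ge0.
by apply: monotone_submodular_sum => x; apply: meet_by_monotone_submodular.
Qed.

Lemma meet_value_set0 j : meet_value j set0 = 0.
Proof. by rewrite /meet_value big1 ?mulr0 // => x _; apply: meet_by_set0. Qed.

Lemma fp_inf_near_meet_value j (S : {set T}) :
  S != set0 -> `|fp_inf R e S - meet_value j S| <= survival_rate R T ^+ j.
Proof.
move=> S_neq0; rewrite (fp_inf_limit R e_loop T_gt0 S e_sym e_conn) /meet_value.
rewrite -mulrBr -sumrB normrM ger0_norm ?invr_ge0 // ler_pdivrMl ?ltr0n //.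
apply: le_trans (ler_norm_sum _ _ _) _.
apply: le_trans (_ : _ <= \sum_(x : T) survival_rate R T ^+ j) _; last first.
  by rewrite sumr_const -[(_ ^+ _) *+ _]mulr_natl.
by apply: ler_sum => x _; apply: fix_prob_near_meet_by.
Qed.

(* [fp_inf] at [set0] is the neutral fixation probability, not a meeting
   probability; setting it to 0 there makes the function submodular. *)
Definition fp_inf0 (S : {set T}) : R := if S == set0 then 0 else fp_inf R e S.

Lemma fp_inf0_monotone_submodular : monotone_submodular fp_inf0.
Proof.
apply: (monotone_submodular_approx (survival_rate_ge0_lt1 R T_gt0)).
  exact: meet_value_monotone_submodular.
move=> j S; rewrite /fp_inf0; case: eqVneq => [->|S_neq0].
  by rewrite meet_value_set0 subrr normr0 exprn_ge0 //; case/andP: (survival_rate_ge0_lt1 R T_gt0).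
exact: fp_inf_near_meet_value.
Qed.

End Submodularity.

Theorem theorem4 (R : realType) (T : finType) (e : rel T)
  (e_sym : symmetric e)
  (e_loop : forall u : T, e u u)
  (e_conn : forall x y : T, connect e x y)
  (k : nat) (k_pos : (0 < k)%N) (k_le : (k <= #|T|)%N)
  (Sstar : {set T})
  (Sstar_card : #|Sstar| = k)
  (Sstar_max : forall S : {set T}, #|S| = k -> fp_inf R e S <= fp_inf R e Sstar)
  (v : 'I_k -> T)
  (v_greedy : forall i : 'I_k,
     let P := [set v j | j : 'I_k & (j < i)%N] in
     v i \notin P /\
     (forall x : T, x \notin P -> fp_inf R e (x |: P) <= fp_inf R e (v i |: P))) :
  fp_inf R e [set v j | j : 'I_k] >= (1 - (expR (1 : R))^-1) * fp_inf R e Sstar.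
Proof.
(* The bound holds for every [Sstar] of size [k]. *)
have T_gt0 : (0 < #|T|)%N := leq_trans k_pos k_le.
have F_ms := fp_inf0_monotone_submodular R e_sym e_loop e_conn T_gt0.
have F0 : fp_inf0 R e set0 = 0 by rewrite /fp_inf0 eqxx.
have FE (S : {set T}) : S != set0 -> fp_inf0 R e S = fp_inf R e S.
  by rewrite /fp_inf0 => /negbTE ->.
have U1_neq0 x (P : {set T}) : x |: P != set0 by apply/set0Pn; exists x; rewrite setU11.
have Sstar_neq0 : Sstar != set0 by rewrite -card_gt0 Sstar_card.
have image_neq0 : [set v j | j : 'I_k] != set0.
  by apply/set0Pn; exists (v (Ordinal k_pos)); apply/imsetP; exists (Ordinal k_pos).
rewrite -(FE _ image_neq0) -(FE _ Sstar_neq0); apply: (greedy_approx F_ms F0 k_pos (eq_leq Sstar_card)).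
by move=> i x xP; rewrite !FE ?U1_neq0 //; apply: (v_greedy i).2.
Qed.
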